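(* Let $G$ be a group generated by the conjugacy class $x^G$ of an element $x\in G$, and assume that the conjugation action of $x$ on $x^G$ (the permutation $y\mapsto xyx^{-1}$) has finite order $m$. Then for every $r\in\mathbb{N}$ with $\gcd(r,m)=1$, the conjugacy class $(x^r)^G$ of $x^r$ has the same cardinality as $x^G$. *)

From Stdlib Require Import Arith.

Record Group := {
  carrier :> Type;
  gmul : carrier -> carrier -> carrier;
  ginv : carrier -> carrier;
  gone : carrier;
  gmul_assoc : forall a b c, gmul a (gmul b c) = gmul (gmul a b) c;
  gmul_one_l : forall a, gmul gone a = a;
  gmul_one_r : forall a, gmul a gone = a;
  gmul_inv_l : forall a, gmul (ginv a) a = gone;
  gmul_inv_r : forall a, gmul a (ginv a) = gone
}.

Arguments gmul {g} _ _.
Arguments ginv {g} _.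
Arguments gone {g}.

Fixpoint gpow {G : Group} (x : G) (n : nat) : G :=
  match n with
  | 0 => gone
  | S k => gmul x (gpow x k)
  end.

Definition conj {G : Group} (g y : G) : G := gmul (gmul g y) (ginv g).

Definition conj_class {G : Group} (x : G) (y : G) : Prop :=
  exists g : G, y = conj g x.

Definition is_subgroup {G : Group} (H : G -> Prop) : Prop :=
  H gone /\ (forall a b, H a -> H b -> H (gmul a b)) /\ (forall a, H a -> H (ginv a)).

Definition generated_by {G : Group} (S : G -> Prop) : Prop :=
  forall H : G -> Prop, is_subgroup H -> (forall s, S s -> H s) -> forall g, H g.

(* The permutation y |-> x y x^-1 of x^G has finite order m:
   m is the least positive integer with (y |-> x y x^-1)^m = id on x^G.
   Note (y |-> x y x^-1)^k = (y |-> x^k y x^-k). *)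
Definition conj_action_order {G : Group} (x : G) (m : nat) : Prop :=
  0 < m /\
  (forall y, conj_class x y -> conj (gpow x m) y = y) /\
  (forall k, 0 < k < m -> exists y, conj_class x y /\ conj (gpow x k) y <> y).

Definition same_card {T : Type} (A B : T -> Prop) : Prop :=
  exists (f : {y | A y} -> {y | B y}) (g : {y | B y} -> {y | A y}),
    (forall a, g (f a) = a) /\ (forall b, f (g b) = b).

From Stdlib Require Import Arith Lia ProofIrrelevance.

(* Write c := x^m.  By hypothesis conjugation by c fixes every
   element of x^G, i.e. c commutes with a generating set of G, hence c is
   central.  Since gcd(r, m) = 1 there is s with s r = 1 mod m, so
   x = (x^r)^s * c^a * (c^b)^-1 for suitable a, b.  Both maps
     w |-> w^r   and   w |-> w^s * c^a * (c^b)^-1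
   commute with every conjugation (the second because its correction factor
   is central), and they send x to x^r and x^r back to x.  A pair of
   conjugation-equivariant maps exchanging two elements restricts to mutually
   inverse bijections between their conjugacy classes. *)

Section GroupFacts.
Context {G : Group}.

Lemma gpow_add (x : G) (a b : nat) : gpow x (a + b) = gmul (gpow x a) (gpow x b).
Proof.
  induction a as [|a IH]; simpl.
  - now rewrite gmul_one_l.
  - now rewrite IH, gmul_assoc.
Qed.

Lemma gpow_mul (x : G) (r s : nat) : gpow (gpow x r) s = gpow x (s * r).
Proof.
  induction s as [|s IH]; simpl; [reflexivity|].
  now rewrite IH, gpow_add.
Qed.

Lemma conj_mul (g a b : G) : gmul (conj g a) (conj g b) = conj g (gmul a b).
Proof.
  unfold conj. rewrite <- !gmul_assoc, (gmul_assoc _ (ginv g) g), gmul_inv_l, gmul_one_l.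
  reflexivity.
Qed.

Lemma conj_pow (g y : G) (n : nat) : gpow (conj g y) n = conj g (gpow y n).
Proof.
  induction n as [|n IH]; simpl.
  - unfold conj. now rewrite gmul_one_r, gmul_inv_r.
  - now rewrite IH, conj_mul.
Qed.

Lemma subgroup_pow (H : G -> Prop) (a : G) (n : nat) :
  is_subgroup H -> H a -> H (gpow a n).
Proof.
  intros [H1 [Hmul _]] Ha.
  induction n as [|n IH]; simpl; auto.
Qed.

Definition commute (a b : G) : Prop := gmul a b = gmul b a.

Lemma commute_sym (a b : G) : commute a b -> commute b a.
Proof. unfold commute. auto. Qed.

Lemma centralizer_subgroup (z : G) : is_subgroup (commute z).
Proof.
  unfold commute. split; [|split].
  - now rewrite gmul_one_l, gmul_one_r.
  - intros a b Ha Hb. now rewrite gmul_assoc, Ha, <- gmul_assoc, Hb, gmul_assoc.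
  - intros a Ha.
    assert (E : gmul (ginv a) z = gmul (ginv a) (gmul (gmul z a) (ginv a))).
    { now rewrite <- !gmul_assoc, gmul_inv_r, gmul_one_r. }
    now rewrite E, Ha, !gmul_assoc, gmul_inv_l, gmul_one_l.
Qed.

Lemma conj_fixed_commute (z y : G) : conj z y = y -> commute z y.
Proof.
  unfold conj, commute. intros Hfix.
  rewrite <- Hfix at 2. now rewrite <- !gmul_assoc, gmul_inv_l, gmul_one_r.
Qed.

Definition central (c : G) : Prop := forall h : G, commute c h.

Lemma central_of_generators (S : G -> Prop) (z : G) :
  generated_by S -> (forall s, S s -> commute z s) -> central z.
Proof. intros Hgen Hz. exact (Hgen _ (centralizer_subgroup z) Hz). Qed.

Lemma central_mul (a b : G) : central a -> central b -> central (gmul a b).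
Proof.
  intros Ha Hb h. apply commute_sym.
  apply (centralizer_subgroup h); apply commute_sym; auto.
Qed.

Lemma central_inv (a : G) : central a -> central (ginv a).
Proof.
  intros Ha h. apply commute_sym.
  apply (centralizer_subgroup h), commute_sym, Ha.
Qed.

Lemma central_pow (a : G) (n : nat) : central a -> central (gpow a n).
Proof.
  intros Ha h. apply commute_sym.
  apply subgroup_pow; [apply centralizer_subgroup|apply commute_sym, Ha].
Qed.

Lemma conj_mul_central (g u c : G) :
  central c -> conj g (gmul u c) = gmul (conj g u) c.
Proof.
  intros Hc. unfold conj. rewrite <- !gmul_assoc, (Hc (ginv g)). reflexivity.
Qed.

Definition conj_equivariant (f : G -> G) : Prop :=
  forall g y, f (conj g y) = conj g (f y).

Lemma equivariant_maps_class (h : G -> G) (u v : G) :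
  conj_equivariant h -> h u = v -> forall w, conj_class u w -> conj_class v (h w).
Proof. intros Hh Huv w [g ->]. exists g. now rewrite Hh, Huv. Qed.

Lemma same_card_of_equivariant (f f' : G -> G) (a b : G) :
  conj_equivariant f -> conj_equivariant f' -> f a = b -> f' b = a ->
  same_card (conj_class a) (conj_class b).
Proof.
  intros Hf Hf' Hab Hba.
  exists (fun w => exist _ (f (proj1_sig w))
                     (equivariant_maps_class f a b Hf Hab _ (proj2_sig w))).
  exists (fun w => exist _ (f' (proj1_sig w))
                     (equivariant_maps_class f' b a Hf' Hba _ (proj2_sig w))).
  split; intros [w [g ->]]; apply eq_sig_hprop; try (intros; apply proof_irrelevance);
    simpl.
  - now rewrite Hf, Hf', Hab, Hba.
  - now rewrite Hf', Hf, Hba, Hab.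
Qed.

Lemma pow_mul_central_equivariant (s : nat) (c : G) :
  central c -> conj_equivariant (fun w => gmul (gpow w s) c).
Proof. intros Hc g y. now rewrite conj_pow, conj_mul_central. Qed.

End GroupFacts.

(* r is invertible modulo m, written without subtraction. *)
Lemma coprime_inverse_mod (r m : nat) :
  Nat.gcd r m = 1 -> exists s a b, s * r + a * m = 1 + b * m.
Proof.
  intros Hr. destruct r as [|r'].
  - simpl in Hr. subst m. now exists 0, 1, 0.
  - destruct (Nat.gcd_bezout_pos (S r') m ltac:(lia)) as [s [b E]].
    rewrite Hr in E. exists s, 0, b. lia.
Qed.

Theorem mainTheorem6 (G : Group) (x : G) (m : nat) :
  generated_by (conj_class x) ->
  conj_action_order x m ->
  forall r : nat, Nat.gcd r m = 1 ->
  same_card (conj_class (gpow x r)) (conj_class x).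
Proof.
  intros Hgen [_ [Hfix _]] r Hr.
  assert (Hcm : central (gpow x m)).
  { apply (central_of_generators _ _ Hgen).
    intros y Hy. now apply conj_fixed_commute, Hfix. }
  destruct (coprime_inverse_mod r m Hr) as [s [a [b E]]].
  set (c := gmul (gpow x (a * m)) (ginv (gpow x (b * m)))).
  assert (Hc : central c).
  { apply central_mul; [|apply central_inv]; rewrite <- gpow_mul; now apply central_pow. }
  apply (same_card_of_equivariant (fun w => gmul (gpow w s) c) (fun w => gpow w r)).
  - now apply pow_mul_central_equivariant.
  - intros g y. now rewrite conj_pow.
  - unfold c. rewrite gpow_mul, gmul_assoc, <- gpow_add, E, gpow_add. simpl (gpow x 1).
    now rewrite gmul_one_r, <- gmul_assoc, gmul_inv_r, gmul_one_r.
  - reflexivity.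
Qed.
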